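(* Let $r\ge1$. The constructions $(Q,E)\mapsto X_{(Q,E)}$ and $X\mapsto(Q_X,E_X)$ (defined in the context) give a one-to-one correspondence, up to isomorphism, between $r$-VASSes and $\mathcal V_r$-presheaves $X$ that are finitely generated and have no double edges, i.e. such that for all $\mathsf u\in\mathbb Z^r$ and distinct $e_1,e_2\in X[(\mathsf u,\mathsf 0)]$ one has $X[(\sigma_{\mathsf u},\iota_{\mathsf 0}^{\mathsf 0})](e_1)\ne X[(\sigma_{\mathsf u},\iota_{\mathsf 0}^{\mathsf 0})](e_2)$ or $X[(\tau_{\mathsf u},\iota_{\mathsf 0}^{\mathsf 0})](e_1)\ne X[(\tau_{\mathsf u},\iota_{\mathsf 0}^{\mathsf 0})](e_2)$. That is, $(Q_{X_{(Q,E)}},E_{X_{(Q,E)}})$ is isomorphic to $(Q,E)$ for every $r$-VASS, and $X\cong X_{(Q_X,E_X)}$ for every such presheaf $X$.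
   Context: An $r$-VASS is a pair $(Q,E)$ with $Q$ a finite set and $E\subseteq Q\times\mathbb Z^r\times Q$ finite; write $e=(\mathrm{src}(e),\mathrm{vec}(e),\mathrm{tgt}(e))$. For an alphabet $\Sigma$ not containing the symbol $\emptyset$, $\mathcal G(\Sigma)$ is the category with objects $\{\emptyset\}\cup\Sigma$, only identity endomorphisms, $\mathcal G(\emptyset,a)=\{\sigma_a,\tau_a\}$ and $\mathcal G(a,\emptyset)=\emptyset$ for $a\in\Sigma$, and no morphisms between distinct letters. For a set $A$, $\mathcal F(A)$ is the category with object set $A$ and exactly one morphism $\iota_a^b:a\to b$ for all $a,b\in A$. $\mathcal V_r$ is the category $\mathcal G(\mathbb Z^r)\times\mathcal F(\mathbb N^r)$ (with d-structure: formorphisms the identities and the $(\sigma_{\mathsf u},\iota^{\mathsf v}_{\mathsf u^-+\mathsf v}):(\emptyset,\mathsf u^-+\mathsf v)\to(\mathsf u,\mathsf v)$, backmorphisms the identities and $(\tau_{\mathsf u},\iota^{\mathsf v}_{\mathsf u^++\mathsf v}):(\emptyset,\mathsf u^++\mathsf v)\to(\mathsf u,\mathsf v)$, where $\mathsf u=\mathsf u^+-\mathsf u^-$ with $\mathsf u^\pm\in\mathbb N^r$ the positive and negative parts). A $\mathcal V_r$-presheaf is a functor $X:\mathcal V_r^{op}\to\mathbf{Set}$; it is finitely generated if $X\cong\operatorname{colim}_{e\in\mathcal E}\mathcal V_r(-,G(e))$ for some finite category $\mathcal E$ and functor $G:\mathcal E\to\mathcal V_r$. For an $r$-VASS $(Q,E)$,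 $X_{(Q,E)}$ is given by $X[(\emptyset,\mathsf v)]=Q\times\{\mathsf v\}$, $X[(\mathsf u,\mathsf v)]=\{(e,\mathsf v)\mid e\in E,\mathrm{vec}(e)=\mathsf u\}$, $X[(\mathrm{id}_\emptyset,\iota_{\mathsf w}^{\mathsf v})](q,\mathsf v)=(q,\mathsf w)$, $X[(\mathrm{id}_{\mathsf u},\iota_{\mathsf w}^{\mathsf v})](e,\mathsf v)=(e,\mathsf w)$, $X[(\sigma_{\mathsf u},\iota_{\mathsf w}^{\mathsf v})](e,\mathsf v)=(\mathrm{src}(e),\mathsf w)$, $X[(\tau_{\mathsf u},\iota_{\mathsf w}^{\mathsf v})](e,\mathsf v)=(\mathrm{tgt}(e),\mathsf w)$. For a $\mathcal V_r$-presheaf $X$, $Q_X=X[(\emptyset,\mathsf 0)]$ and $E_X=\bigcup_{\mathsf u\in\mathbb Z^r}\{(X[(\sigma_{\mathsf u},\iota_{\mathsf 0}^{\mathsf 0})](e),\mathsf u,X[(\tau_{\mathsf u},\iota_{\mathsf 0}^{\mathsf 0})](e))\mid e\in X[(\mathsf u,\mathsf 0)]\}$. *)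

From mathcomp Require Import all_boot all_order all_algebra.
Set Implicit Arguments. Unset Strict Implicit. Unset Printing Implicit Defensive.

Definition Zr (r : nat) := {ffun 'I_r -> int}.
Definition Nr (r : nat) := {ffun 'I_r -> nat}.
Definition N0 (r : nat) : Nr r := [ffun _ => 0%N].

(* membership in a list, for types without decidable equality *)
Fixpoint inl {T : Type} (x : T) (s : seq T) : Prop :=
  match s with [::] => False | y :: s' => y = x \/ inl x s' end.

Record vass (r : nat) := Vass { vQ : Type ; vE : vQ * Zr r * vQ -> Prop }.
Arguments vE {r} v _.

Definition is_vass r (V : vass r) : Prop :=
  (exists s : seq (vQ V), forall q, inl q s) /\
  (exists s : seq (vQ V * Zr r * vQ V), forall e, vE V e -> inl e s).

Definition vass_iso r (V W : vass r) : Prop :=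
  exists f : vQ V -> vQ W, bijective f /\
    forall q u q', vE V (q, u, q') <-> vE W (f q, u, f q').

(* objects: None = the empty-word object, Some a = the letter a *)
Inductive Gmor {Z : Type} : option Z -> option Z -> Type :=
| Gid (a : option Z) : Gmor a a
| Gsig (u : Z) : Gmor None (Some u)
| Gtau (u : Z) : Gmor None (Some u).

Definition gcomp {Z : Type} {a b c : option Z} (h : Gmor b c) : Gmor a b -> Gmor a c :=
  match h in Gmor b c return Gmor a b -> Gmor a c with
  | Gid _ => fun g => g
  | Gsig u => fun g =>
      match g in Gmor a' b' return
            (match b' with None => Gmor a' (Some u) | Some _ => unit end) with
      | Gid x => match x as x0 return
                   (match x0 with None => Gmor x0 (Some u) | Some _ => unit end) with
                 | None => Gsig u | Some _ => tt end
      | Gsig _ => tt | Gtau _ => tt end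
  | Gtau u => fun g =>
      match g in Gmor a' b' return
            (match b' with None => Gmor a' (Some u) | Some _ => unit end) with
      | Gid x => match x as x0 return
                   (match x0 with None => Gmor x0 (Some u) | Some _ => unit end) with
                 | None => Gtau u | Some _ => tt end
      | Gsig _ => tt | Gtau _ => tt end
  end.

Inductive Fmor {A : Type} (a b : A) : Type := Iota.

Definition Vobj (r : nat) := (option (Zr r) * Nr r)%type.
Definition Vmor r (A B : Vobj r) := (Gmor A.1 B.1 * Fmor A.2 B.2)%type.
Definition vid r (A : Vobj r) : Vmor A A := (Gid A.1, Iota A.2 A.2).
Definition vcomp r (A B C : Vobj r) (h : Vmor B C) (g : Vmor A B) : Vmor A C :=
  (gcomp h.1 g.1, Iota A.2 C.2).

Definition sig0 r (u : Zr r) : Vmor (None, N0 r) (Some u, N0 r) := (Gsig u, Iota _ _).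
Definition tau0 r (u : Zr r) : Vmor (None, N0 r) (Some u, N0 r) := (Gtau u, Iota _ _).

Record psh (r : nat) := Psh {
  ob : Vobj r -> Type ;
  act : forall A B : Vobj r, Vmor A B -> ob B -> ob A }.
Arguments act {r} p {A B}.
Arguments ob {r} p _.

Definition is_presheaf r (X : psh r) : Prop :=
  (forall A (x : ob X A), act X (vid A) x = x) /\
  (forall A B C (g : Vmor A B) (h : Vmor B C) (x : ob X C),
      act X (vcomp h g) x = act X g (act X h x)).

Definition nat_trans r (X Y : psh r) (th : forall A, ob X A -> ob Y A) : Prop :=
  forall A B (f : Vmor A B) (x : ob X B), th A (act X f x) = act Y f (th B x).

Definition psh_iso r (X Y : psh r) : Prop :=
  exists th : forall A, ob X A -> ob Y A, nat_trans th /\ forall A, bijective (th A).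

Definition yon r (B : Vobj r) : psh r :=
  @Psh r (fun A => Vmor A B) (fun A C (g : Vmor A C) (f : Vmor C B) => vcomp f g).

Record fcat := FCat {
  cob : finType ;
  chom : cob -> cob -> finType ;
  cid : forall a, chom a a ;
  ccomp : forall a b c, chom b c -> chom a b -> chom a c }.

Definition is_cat (C : fcat) : Prop :=
  (forall (a b : cob C) (f : chom a b), ccomp (cid b) f = f) /\
  (forall (a b : cob C) (f : chom a b), ccomp f (cid a) = f) /\
  (forall (a b c d : cob C) (f : chom a b) (g : chom b c) (h : chom c d),
      ccomp h (ccomp g f) = ccomp (ccomp h g) f).

Record diag (r : nat) (C : fcat) := Diag {
  dob : cob C -> Vobj r ;
  dmor : forall a b, chom a b -> Vmor (dob a) (dob b) }.

Definition is_functor r C (G : diag r C) : Prop :=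
  (forall a, dmor G (cid a) = vid (dob G a)) /\
  (forall a b c (f : chom a b) (g : chom b c),
      dmor G (ccomp g f) = vcomp (dmor G g) (dmor G f)).

Definition cocone r C (G : diag r C) (Y : psh r)
    (lam : forall c A, Vmor A (dob G c) -> ob Y A) : Prop :=
  (forall c, nat_trans (X := yon (dob G c)) (lam c)) /\
  (forall c c' (k : chom c c') A (f : Vmor A (dob G c)),
      lam c A f = lam c' A (vcomp (dmor G k) f)).

Definition is_colimit r C (G : diag r C) (X : psh r)
    (lam : forall c A, Vmor A (dob G c) -> ob X A) : Prop :=
  cocone lam /\
  forall (Y : psh r) (mu : forall c A, Vmor A (dob G c) -> ob Y A),
    is_presheaf Y -> cocone mu ->
    (exists th : forall A, ob X A -> ob Y A,
        nat_trans th /\ forall c A f, th A (lam c A f) = mu c A f) /\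
    (forall th th' : forall A, ob X A -> ob Y A,
        nat_trans th -> (forall c A f, th A (lam c A f) = mu c A f) ->
        nat_trans th' -> (forall c A f, th' A (lam c A f) = mu c A f) ->
        forall A x, th A x = th' A x).

Definition fin_gen r (X : psh r) : Prop :=
  exists (C : fcat) (G : diag r C) (lam : forall c A, Vmor A (dob G c) -> ob X A),
    is_cat C /\ is_functor G /\ is_colimit lam.

Definition no_double_edges r (X : psh r) : Prop :=
  forall (u : Zr r) (e1 e2 : ob X (Some u, N0 r)), e1 <> e2 ->
    act X (sig0 u) e1 <> act X (sig0 u) e2 \/ act X (tau0 u) e1 <> act X (tau0 u) e2.

Definition XVob r (V : vass r) (a : option (Zr r)) (v : Nr r) : Type :=
  match a with
  | None => {p : vQ V * Nr r | p.2 = v}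
  | Some u => {p : (vQ V * Zr r * vQ V) * Nr r |
                 vE V p.1 /\ p.1.1.2 = u /\ p.2 = v}
  end.

Definition XVact r (V : vass r) (A B : Vobj r) (f : Vmor A B) :
    XVob V B.1 B.2 -> XVob V A.1 A.2 :=
  let w := A.2 in let v := B.2 in
  match f.1 in Gmor a b return XVob V b v -> XVob V a w with
  | Gid c =>
      match c as c0 return XVob V c0 v -> XVob V c0 w with
      | None => fun x => exist _ ((sval x).1, w) erefl
      | Some u => fun x => exist _ ((sval x).1, w)
          (conj (proj1 (proj2_sig x)) (conj (proj1 (proj2 (proj2_sig x))) erefl))
      end
  | Gsig u => fun x => exist _ ((sval x).1.1.1, w) erefl
  | Gtau u => fun x => exist _ ((sval x).1.2, w) erefl
  end.

Definition XV r (V : vass r) : psh r :=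
  @Psh r (fun A => XVob V A.1 A.2) (@XVact r V).

Definition VX r (X : psh r) : vass r :=
  @Vass r (ob X (None, N0 r))
    (fun t => exists e : ob X (Some t.1.2, N0 r),
        act X (sig0 t.1.2) e = t.1.1 /\ act X (tau0 t.1.2) e = t.2).

(* Colimit coprojections are jointly surjective, so a finitely generated
   presheaf has only finitely many level-0 elements: every element of
   [X(None, 0)] or [X(Some u, 0)] is the image of one of the at most two
   morphisms from that object into a generating object.  Since [F(N^r)] is
   indiscrete, [X(a, v)] is naturally isomorphic to [X(a, 0)], and the level-0
   part of [X] is exactly the graph [(Q_X, E_X)]; without double edges an
   element of [X(Some u, 0)] is determined by its source and target, which
   gives [X ~ X_(Q_X, E_X)].  Conversely [X_(Q, E)] is the colimit of the
   representables indexed by the finite category of states and edges of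
   [(Q, E)], whose non-identity arrows are the incidences of a state with an
   edge as its source or target. *)

From mathcomp Require Import all_boot all_order all_algebra.
From mathcomp Require Import boolp.
From Stdlib Require Import Program.Equality.
Set Implicit Arguments. Unset Strict Implicit. Unset Printing Implicit Defensive.

Lemma sval_inj_prop (T : Type) (P : T -> Prop) : injective (@sval T P).
Proof. by case=> x px [y py] /= exy; apply: eq_exist. Qed.

Lemma inlP (T : eqType) (x : T) (s : seq T) : reflect (inl x s) (x \in s).
Proof.
elim: s => [|y s IHs] /=; first by constructor.
rewrite in_cons eq_sym; apply: (iffP orP) => -[/eqP|/IHs]; by [left | right].
Qed.

Lemma inj_surj_bijective (A B : Type) (f : A -> B) :
  injective f -> (forall y, exists x, f x = y) -> bijective f.
Proof.
move=> f_inj f_surj; pose g y := projT1 (cid (f_surj y)).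
have fgK : cancel g f by move=> y; rewrite /g; case: cid.
by exists g => // x; apply: f_inj; rewrite fgK.
Qed.

Section GmorFacts.
Variable Z : Type.

Definition Gcast (u u' : Z) (e : u = u') : Gmor (Some u) (Some u') :=
  eq_rect u (fun u' => Gmor (Some u) (Some u')) (Gid (Some u)) u' e.

Lemma Gcast_id u (e : u = u) : Gcast e = Gid (Some u).
Proof. by rewrite (Prop_irrelevance e erefl). Qed.

Lemma Gmor_SomeE u u' (g : Gmor (Some u) (Some u')) : exists e : u = u', g = Gcast e.
Proof. by dependent destruction g; exists erefl. Qed.

Lemma Gmor_NoneE (g : Gmor (Z := Z) None None) : g = Gid None.
Proof. by dependent destruction g. Qed.

Lemma Gmor_None_SomeE (u : Z) (g : Gmor None (Some u)) : g = Gsig u \/ g = Gtau u.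
Proof. by dependent destruction g; [left | right]. Qed.

Lemma Gmor_Some_None (u : Z) (g : Gmor (Some u) None) : False.
Proof. by dependent destruction g. Qed.

Lemma gcomp_Gcast_sig u u' (e : u = u') : gcomp (Gcast e) (Gsig u) = Gsig u'.
Proof. by destruct e. Qed.

Lemma gcomp_Gcast_tau u u' (e : u = u') : gcomp (Gcast e) (Gtau u) = Gtau u'.
Proof. by destruct e. Qed.

Lemma gcomp_Gcast u1 u2 u3 (e12 : u1 = u2) (e23 : u2 = u3) (e13 : u1 = u3) :
  gcomp (Gcast e23) (Gcast e12) = Gcast e13.
Proof. by destruct e12, e23; rewrite (Prop_irrelevance e13 erefl). Qed.

End GmorFacts.

Section Colimits.
Variables (r : nat) (C : fcat) (G : diag r C).

Lemma is_colimit_intro (X : psh r) (lam : forall c A, Vmor A (dob G c) -> ob X A) :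
  cocone lam -> (forall A x, exists c f, lam c A f = x) ->
  (forall Y (mu : forall c A, Vmor A (dob G c) -> ob Y A), cocone mu ->
     forall c c' A f f', lam c A f = lam c' A f' -> mu c A f = mu c' A f') ->
  is_colimit lam.
Proof.
move=> lam_cocone lam_surj lam_refl; split=> // Y mu _ mu_cocone.
have pick A x : {cf : {c & Vmor A (dob G c)} | lam (projT1 cf) A (projT2 cf) = x}.
  by apply: cid; have [c [f <-]] := lam_surj A x; exists (existT _ c f).
split.
- exists (fun A x => mu _ A (projT2 (sval (pick A x)))); split.
  + move=> A B g x; case: (pick B x) => -[c f] /= lam_f.
    case: (pick A (act X g x)) => -[c' f'] /= lam_f'.
    rewrite -(proj1 mu_cocone c A B g f); apply: lam_refl => //.
    by rewrite lam_f' -lam_f (proj1 lam_cocone c A B g f).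
  + by move=> c A f; case: pick => -[c' f'] /=; apply: lam_refl.
- by move=> th th' _ th_lam _ th'_lam A x; have [c [f <-]] := lam_surj A x;
  rewrite th_lam th'_lam.
Qed.

Variables (X : psh r) (lam : forall c A, Vmor A (dob G c) -> ob X A).
Hypotheses (X_psh : is_presheaf X) (lam_colim : is_colimit lam).
Arguments lam : clear implicits.

Definition in_colim_image A (x : ob X A) := exists c f, lam c A f = x.

Lemma in_colim_image_act A B (g : Vmor A B) x :
  in_colim_image x -> in_colim_image (act X g x).
Proof.
by move=> [c [f <-]]; exists c, (vcomp f g); rewrite (proj1 (proj1 lam_colim)).
Qed.

Definition colim_image : psh r :=
  @Psh r (fun A => {x : ob X A | in_colim_image x})
    (fun A B g y => exist _ (act X g (sval y)) (in_colim_image_act g (svalP y))).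

Lemma colim_image_presheaf : is_presheaf colim_image.
Proof.
split=> [A x|A B C' g h x]; apply: sval_inj_prop => /=.
  exact: (proj1 X_psh).
exact: (proj2 X_psh).
Qed.

(* Corestricting [lam] to its image and composing with the inclusion gives a
   cocone endomorphism of [X], which the universal property forces to be the identity. *)
Lemma colimit_jointly_surjective A (x : ob X A) : in_colim_image x.
Proof.
pose mu c A f : ob colim_image A :=
  exist _ (lam c A f) (ex_intro _ c (ex_intro _ f erefl)).
have mu_cocone : cocone mu.
  by split=> [c A' B g f|c c' k A' f]; apply: sval_inj_prop;
    [exact: (proj1 (proj1 lam_colim)) | exact: (proj2 (proj1 lam_colim))].
have [[th [th_nat th_lam]] _] := proj2 lam_colim _ mu colim_image_presheaf mu_cocone.
have [_ colim_uniq] := proj2 lam_colim X lam X_psh (proj1 lam_colim).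
have <- : sval (th A x) = x; last exact: svalP.
apply: (colim_uniq (fun A x => sval (th A x)) (fun A x => x)) => //.
- by move=> A' B f y /=; rewrite th_nat.
- by move=> c A' f /=; rewrite th_lam.
Qed.

End Colimits.

Lemma inl_map (A B : Type) (f : A -> B) x s : inl x s -> inl (f x) (map f s).
Proof. by elim: s => //= y s IHs [->|/IHs]; [left | right]. Qed.

Lemma inl_flatten_enum (T : finType) (A : Type) (F : T -> seq A) c x :
  inl x (F c) -> inl x (flatten [seq F c | c <- enum T]).
Proof.
move=> /(inlP (T := {classic A})) xFc; apply/(inlP (T := {classic A})).
by apply/flatten_mapP; exists c; rewrite ?mem_enum.
Qed.

Definition iota_from0 r a v : Vmor (a, N0 r) (a, v) := (Gid a, Iota _ _).
Definition iota_to0 r a v : Vmor (a, v) (a, N0 r) := (Gid a, Iota _ _).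

Section PresheafToVASS.
Variables (r : nat) (X : psh r).
Hypothesis X_psh : is_presheaf X.

Definition homs_from_empty (B : Vobj r) : seq (Vmor (None, N0 r) B) :=
  match B with
  | (None, v) => [:: (Gid None, Iota _ v)]
  | (Some u, v) => [:: (Gsig u, Iota _ v); (Gtau u, Iota _ v)]
  end.

Lemma homs_from_empty_complete B (f : Vmor (None, N0 r) B) : inl f (homs_from_empty B).
Proof. by case: B f => b v [g []]; simpl in g; dependent destruction g; simpl; tauto. Qed.

(* A morphism [(Some u, 0) -> B] exists only for [B = (Some u, v)], and it is
   unique; so each generator contributes at most one edge. *)
Definition edges_from (B : Vobj r) (l : forall A, Vmor A B -> ob X A) :
    seq (vQ (VX X) * Zr r * vQ (VX X)) :=
  match B return (forall A, Vmor A B -> ob X A) -> _ with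
  | (Some u, v) => fun l =>
      let e := l (Some u, N0 r) (Gid (Some u), Iota _ v) in
      [:: (act X (sig0 u) e, u, act X (tau0 u) e)]
  | (None, _) => fun _ => [::]
  end l.

Lemma edges_from_complete B (l : forall A, Vmor A B -> ob X A) u
    (f : Vmor (Some u, N0 r) B) :
  inl (act X (sig0 u) (l _ f), u, act X (tau0 u) (l _ f)) (edges_from l).
Proof.
by case: B l f => b v l [g []]; simpl in g; dependent destruction g; simpl; tauto.
Qed.

Lemma VX_is_vass (C : fcat) (G : diag r C)
    (lam : forall c A, Vmor A (dob G c) -> ob X A) :
  is_colimit lam -> is_vass (VX X).
Proof.
move=> lam_colim; have lam_surj := colimit_jointly_surjective X_psh lam_colim.
split.
- exists (flatten [seq map (lam c _) (homs_from_empty (dob G c)) | c <- enum (cob C)]).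
  move=> q; have [c [f <-]] := lam_surj _ q.
  by apply: (inl_flatten_enum (c := c)); apply: inl_map; apply: homs_from_empty_complete.
- exists (flatten [seq edges_from (lam c) | c <- enum (cob C)]).
  move=> [[q u] q'] [e [/= <- <-]]; have [c [f <-]] := lam_surj _ e.
  by apply: (inl_flatten_enum (c := c)); apply: edges_from_complete.
Qed.

Lemma actM A B C' (g : Vmor A B) (h : Vmor B C') x :
  act X g (act X h x) = act X (vcomp h g) x.
Proof. by rewrite (proj2 X_psh). Qed.

Lemma act_iota_from0K a v : cancel (act X (iota_from0 a v)) (act X (iota_to0 a v)).
Proof. by move=> x; rewrite actM; apply: (proj1 X_psh (a, v)). Qed.

Lemma act_iota_to0K a v : cancel (act X (iota_to0 a v)) (act X (iota_from0 a v)).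
Proof. by move=> x; rewrite actM; apply: (proj1 X_psh (a, N0 r)). Qed.

Definition unitVX (A : Vobj r) : ob X A -> ob (XV (VX X)) A :=
  match A with
  | (None, v) => fun x =>
      exist (fun p : vQ (VX X) * Nr r => p.2 = v) (act X (iota_from0 None v) x, v) erefl
  | (Some u, v) => fun x =>
      let e := act X (iota_from0 (Some u) v) x in
      exist (fun p : (vQ (VX X) * Zr r * vQ (VX X)) * Nr r =>
                 vE (VX X) p.1 /\ p.1.1.2 = u /\ p.2 = v)
        ((act X (sig0 u) e, u, act X (tau0 u) e), v)
        (conj (ex_intro _ e (conj erefl erefl)) (conj erefl erefl))
  end.

Lemma unitVX_nat : nat_trans unitVX.
Proof.
move=> [a w] [b v] [g []] x; simpl in g.
by destruct g as [[u|]|u|u]; apply: sval_inj_prop; rewrite /= !actM.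
Qed.

Hypothesis X_nde : no_double_edges X.

Lemma unitVX_bij A : bijective (@unitVX A).
Proof.
case: A => -[u|] v; apply: inj_surj_bijective.
- move=> x1 x2 /(congr1 sval) [eq_src eq_tgt].
  apply: (can_inj (@act_iota_from0K (Some u) v)); apply: contrapT => neq_e.
  by case: (X_nde neq_e).
- move=> -[[[[q u'] q'] v'] [[e [src_e tgt_e]] [/= eu ev]]].
  simpl in e, src_e, tgt_e; subst.
  exists (act X (iota_to0 (Some u) v) e); apply: sval_inj_prop.
  by rewrite /= act_iota_to0K.
- move=> x1 x2 /(congr1 sval) [eq_x].
  exact: (can_inj (@act_iota_from0K None v)).
- move=> -[[q v'] /= ev]; subst v'.
  exists (act X (iota_to0 None v) q); apply: sval_inj_prop.
  by rewrite /= act_iota_to0K.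
Qed.

End PresheafToVASS.

Section VASSToPresheaf.
Variables (r : nat) (V : vass r).

Lemma XVact_comp a b c (g : Gmor a b) (h : Gmor b c) w v z (x : XVob V c z) :
  XVact (A := (a, w)) (B := (c, z)) (gcomp h g, Iota w z) x =
  XVact (A := (a, w)) (B := (b, v)) (g, Iota w v)
    (XVact (A := (b, v)) (B := (c, z)) (h, Iota v z) x).
Proof.
by destruct h as [[u|]|u|u]; dependent destruction g; apply: sval_inj_prop.
Qed.

Lemma XV_presheaf : is_presheaf (XV V).
Proof.
split.
- move=> [[u|] w] [[p w'] pP]; apply: sval_inj_prop => /=.
  + by case: pP => _ [_ /= ->].
  + by move: pP => /= ->.
- by move=> [a w] [b v] [c z] [g []] [h []] x; apply: XVact_comp.
Qed.

Lemma XV_no_double_edges : no_double_edges (XV V).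
Proof.
move=> u [[[[s1 u1] t1] w1] e1P] [[[[s2 u2] t2] w2] e2P] neq_e.
apply: contrapT => /not_orP [/contrapT eq_src /contrapT eq_tgt].
move: eq_src eq_tgt => /(congr1 (fun x => (sval x).1)) /= eq_src.
move=> /(congr1 (fun x => (sval x).1)) /= eq_tgt.
apply: neq_e; apply: sval_inj_prop.
by case: e1P e2P => _ [/= -> ->] [_ [/= -> ->]]; rewrite eq_src eq_tgt.
Qed.

Lemma VX_XV_iso : vass_iso (VX (XV V)) V.
Proof.
exists (fun q => (sval q).1); split.
  exists (fun q => exist (fun p : vQ V * Nr r => p.2 = N0 r) (q, N0 r) erefl) => //.
  by move=> [[q w] /= ew]; apply: sval_inj_prop; rewrite /= ew.
move=> q u q'; split.
- by move=> [[[[[s u'] t] w] [vE_e [/= eu ew]]] [/= <- <-]]; subst u'.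
- move=> vE_e.
  exists (exist (fun p : (vQ V * Zr r * vQ V) * Nr r =>
                   vE V p.1 /\ p.1.1.2 = u /\ p.2 = N0 r)
           (((sval q).1, u, (sval q').1), N0 r) (conj vE_e (conj erefl erefl))).
  by split; apply: sval_inj_prop => /=;
    [case: q {vE_e} => -[? ?] /= -> | case: q' {vE_e} => -[? ?] /= ->].
Qed.

Lemma XVact_Gcast u u' (e : u = u') w v (x : XVob V (Some u') v) :
  sval (XVact (A := (Some u, w)) (B := (Some u', v)) (Gcast e, Iota w v) x) =
  ((sval x).1, w).
Proof. by destruct e. Qed.

Section FiniteGeneration.
Variables (sQ : seq (vQ V)) (sE : seq (vQ V * Zr r * vQ V)).
Hypotheses (sQ_all : forall q, inl q sQ) (sE_all : forall e, vE V e -> inl e sE).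

Definition state : finType := seq_sub (sQ : seq {classic (vQ V)}).
Definition edges : seq {classic (vQ V * Zr r * vQ V)} := [seq e <- sE | `[< vE V e >]].
Definition edge : finType := seq_sub edges.
Definition node : finType := (state + edge)%type.

Local Notation State i := (Datatypes.inl i).
Local Notation Edge k := (Datatypes.inr k).

Definition vec (k : edge) : Zr r := (val k).1.2.

Lemma edge_vE (k : edge) : vE V (val k).
Proof. by case: k => e /=; rewrite mem_filter => /andP [/asboolP]. Qed.

(* Besides the identities, the only arrows are [State (src k) -> Edge k]
   (coded [false]) and [State (tgt k) -> Edge k] (coded [true]). *)
Definition is_hom (a b : node) (x : bool) : bool :=
  match a, b with
  | State i, State j => ~~ x && (i == j)
  | Edge k, Edge l => ~~ x && (k == l)
  | State i, Edge k => val i == (if x then (val k).2 else (val k).1.1)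
  | Edge _, State _ => false
  end.

Definition hom (a b : node) : finType := {x : bool | is_hom a b x}.

Lemma is_hom_id a : is_hom a a false.
Proof. by case: a => x /=. Qed.

Lemma is_hom_comp a b c x y : is_hom b c x -> is_hom a b y ->
  is_hom a c (if b is State _ then x else y).
Proof.
case: a => [i|k]; case: b => [j|l]; case: c => [j'|l'] //=.
- by move=> /andP [nx /eqP <-] /andP [_ /eqP ->]; rewrite nx eqxx.
- by move=> ? /andP [_ /eqP ->].
- by move=> /andP [_ /eqP <-].
- by move=> /andP [_ /eqP <-] /andP [ny /eqP ->]; rewrite ny eqxx.
Qed.

Definition hom_id a : hom a a := exist (is_hom a a) false (is_hom_id a).

Definition hom_comp a b c (h : hom b c) (g : hom a b) : hom a c :=
  exist (is_hom a c) _ (is_hom_comp (valP h) (valP g)).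

Definition node_cat : fcat := @FCat node hom hom_id hom_comp.

Lemma node_cat_is_cat : is_cat node_cat.
Proof.
split; [|split].
- move=> a b [x xP]; apply: val_inj => /=.
  by case: b xP => // j; case: a => [i|k] //= /andP [/negbTE ->].
- move=> a b [x xP]; apply: val_inj => /=.
  by case: a xP => // k; case: b => [j|l] //= /andP [/negbTE ->].
- move=> a b c d [x xP] [y yP] [z zP]; apply: val_inj => /=.
  by case: b c xP yP zP => [?|?] [?|?].
Qed.

Definition node_obj (a : node) : Vobj r :=
  if a is Edge k then (Some (vec k), N0 r) else (None, N0 r).

Lemma hom_edge_vec k l (x : hom (Edge k) (Edge l)) : vec k = vec l.
Proof. by case: x => x /andP [_ /eqP ->]. Qed.

Lemma hom_edge_state k i (x : hom (Edge k) (State i)) : False.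
Proof. by case: x. Qed.

Definition node_mor (a b : node) : hom a b -> Vmor (node_obj a) (node_obj b) :=
  match a, b with
  | State _, State _ => fun _ => (Gid None, Iota _ _)
  | Edge _, Edge _ => fun x => (Gcast (hom_edge_vec x), Iota _ _)
  | State _, Edge k => fun x => (if val x then Gtau (vec k) else Gsig (vec k), Iota _ _)
  | Edge _, State _ => fun x => False_rect _ (hom_edge_state x)
  end.

Definition node_diag : diag r node_cat := @Diag r node_cat node_obj node_mor.

Lemma node_diag_is_functor : is_functor node_diag.
Proof.
split.
- by case=> [i|k] //=; rewrite Gcast_id.
- case=> [i|k] [j|l] [j'|l'] x y;
    try by [case: (hom_edge_state x) | case: (hom_edge_state y)].
  all: case: x y => [x xP] [y yP] //=.
  + by case: y {yP}.
  + by case: x {xP}; rewrite /vcomp /= ?gcomp_Gcast_sig ?gcomp_Gcast_tau.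
  + by rewrite /vcomp /=; congr (_, _); symmetry; apply: gcomp_Gcast.
Qed.

Definition generator (a : node) : ob (XV V) (node_obj a) :=
  match a return ob (XV V) (node_obj a) with
  | State i => exist (fun p : vQ V * Nr r => p.2 = N0 r) (val i, N0 r) erefl
  | Edge k => exist (fun p : (vQ V * Zr r * vQ V) * Nr r =>
                       vE V p.1 /\ p.1.1.2 = vec k /\ p.2 = N0 r)
                (val k, N0 r) (conj (edge_vE k) (conj erefl erefl))
  end.

Definition node_lam (a : node) (A : Vobj r) (f : Vmor A (node_obj a)) : ob (XV V) A :=
  act (XV V) f (generator a).
Arguments node_lam : clear implicits.

Lemma generator_compat a b (x : hom a b) :
  act (XV V) (node_mor x) (generator b) = generator a.
Proof.
case: a b x => [i|k] [j|l] x.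
- have eij : i = j by case: x => x /andP [_ /eqP].
  by subst j; apply: sval_inj_prop.
- by case: x => -[] xP; apply: sval_inj_prop => /=; move/eqP: xP => ->.
- by case: (hom_edge_state x).
- have ekl : k = l by case: x => x /andP [_ /eqP].
  by subst l; apply: sval_inj_prop; rewrite /= Gcast_id.
Qed.

Lemma node_lam_cocone : @cocone r node_cat node_diag (XV V) node_lam.
Proof.
split=> [a A B g f|a b x A f]; first exact: (proj2 XV_presheaf).
by rewrite /node_lam (proj2 XV_presheaf) generator_compat.
Qed.

Definition state_of (q : vQ V) : state :=
  SeqSub (introT (inlP (T := {classic _}) q sQ) (sQ_all q)).

Lemma mem_edges e : vE V e -> e \in edges.
Proof.
move=> vE_e; rewrite (mem_filter (T := {classic _})).
apply/andP; split; first exact/asboolP.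
exact: introT (inlP (T := {classic _}) e sE) (sE_all vE_e).
Qed.

Definition edge_of e (vE_e : vE V e) : edge := SeqSub (mem_edges vE_e).

Lemma node_lam_surj A x : exists a (f : Vmor A (node_obj a)), node_lam a A f = x.
Proof.
case: A x => -[u|] w [[p w'] pP].
- case: pP => [vE_p [/= eu ew]].
  exists (Edge (edge_of vE_p)), (Gcast (esym eu), Iota w _).
  by apply: sval_inj_prop; rewrite /node_lam XVact_Gcast /= ew.
- simpl in pP; subst w'; exists (State (state_of p)), (iota_to0 None w).
  exact: sval_inj_prop.
Qed.

Lemma cocone_state_rep w a (f : Vmor (None, w) (node_obj a)) :
  exists i : state, forall Y (mu : forall a A, Vmor A (node_obj a) -> ob Y A),
    @cocone r node_cat node_diag Y mu -> mu a _ f = mu (State i) _ (iota_to0 None w).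
Proof.
case: a f => [i|k] [g []] /=.
  by rewrite (Gmor_NoneE g); exists i.
case: (Gmor_None_SomeE g) => ->.
- have srcP : is_hom (State (state_of (val k).1.1)) (Edge k) false by apply/eqP.
  exists (state_of (val k).1.1) => Y mu mu_cocone.
  by rewrite (proj2 mu_cocone _ _ (exist _ false srcP)).
- have tgtP : is_hom (State (state_of (val k).2)) (Edge k) true by apply/eqP.
  exists (state_of (val k).2) => Y mu mu_cocone.
  by rewrite (proj2 mu_cocone _ _ (exist _ true tgtP)).
Qed.

Lemma node_lam_reflect Y (mu : forall a A, Vmor A (node_obj a) -> ob Y A) :
  @cocone r node_cat node_diag Y mu ->
  forall a a' A f f', node_lam a A f = node_lam a' A f' -> mu a A f = mu a' A f'.
Proof.
move=> mu_cocone a a' [[u|] w] f f' eq_lam.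
- case: a f eq_lam => [i|k] [g []] eq_lam; first by case: (Gmor_Some_None g).
  case: a' f' eq_lam => [i'|k'] [g' []] eq_lam; first by case: (Gmor_Some_None g').
  have [e eg] := Gmor_SomeE g; have [e' eg'] := Gmor_SomeE g'; subst g g'.
  move/(congr1 (fun x => (sval x).1)): eq_lam.
  rewrite /node_lam !XVact_Gcast => /val_inj ekk'.
  by subst k'; rewrite (Prop_irrelevance e' e).
- have [i rep_i] := cocone_state_rep f; have [i' rep_i'] := cocone_state_rep f'.
  rewrite (rep_i _ _ node_lam_cocone) (rep_i' _ _ node_lam_cocone) in eq_lam.
  move/(congr1 (fun x => (sval x).1)): eq_lam => /val_inj eii'.
  by rewrite rep_i // rep_i' // eii'.
Qed.

Lemma XV_fin_gen : fin_gen (XV V).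
Proof.
exists node_cat, node_diag, node_lam; split; first exact: node_cat_is_cat.
split; first exact: node_diag_is_functor.
exact: is_colimit_intro node_lam_cocone node_lam_surj node_lam_reflect.
Qed.

End FiniteGeneration.

End VASSToPresheaf.

Theorem proposition15 (r : nat) (hr : (1 <= r)%N) :
  (forall V : vass r, is_vass V ->
     is_presheaf (XV V) /\ fin_gen (XV V) /\ no_double_edges (XV V) /\
     vass_iso (VX (XV V)) V) /\
  (forall X : psh r, is_presheaf X -> fin_gen X -> no_double_edges X ->
     is_vass (VX X) /\ psh_iso X (XV (VX X))).
Proof.
split.
- move=> V [[sQ sQ_all] [sE sE_all]].
  split; first exact: XV_presheaf.
  split; first exact: XV_fin_gen sQ_all sE_all.
  by split; [exact: XV_no_double_edges | exact: VX_XV_iso].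
- move=> X X_psh [C [G [lam [_ [_ lam_colim]]]]] X_nde.
  split; first exact: VX_is_vass lam_colim.
  by exists (@unitVX r X); split; [exact: unitVX_nat | exact: unitVX_bij].
Qed.
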